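(* Let $f:\mathbb{R}^n\to\mathbb{R}$ be a continuously differentiable convex function. Let $H$ be a diagonal matrix with nonnegative diagonal entries such that $f(y)\le f(x)+\nabla f(x)^T(y-x)+\tfrac12\|y-x\|_H^2$ for all $x,y$, and let $D$ be diagonal with $D\succ H$. Let $(x_k)$ be a sequence generated by the IWHT algorithm with $D$, and assume $(x_k)$ is bounded. Then $f(x_k)$ converges to a limit $f^*$ and there exist $K\in\mathbb{N}$ and $c>0$ such that $f(x_k)-f^*\le c/k$ for all $k\ge K$. If moreover $f$ is $s$-restricted strongly convex, then $f(x_k)$ converges to $f^*$ linearly, i.e. there exist $c>0$ and $\rho\in(0,1)$ with $f(x_k)-f^*\le c\rho^k$ for all sufficiently large $k$.
   Context: $\|z\|_A^2=z^TAz$. $C_s=\{x\in\mathbb{R}^n:\|x\|_0\le s\}$ for a positive integer $s$, where $\|x\|_0$ is the number of nonzero entries. $\mathcal{P}_{C_s}(z)=\operatorname{argmin}_{y\in C_s}\|y-z\|_2^2$ (set-valued). IWHT with diagonal $D\succ0$: start from $x_0\in C_s$; pick $y_{k+1}\in\mathcal{P}_{C_s}\big(D^{1/2}x_k-D^{-1/2}\nabla f(x_k)\big)$ and set $x_{k+1}=D^{-1/2}y_{k+1}$. $f$ is $s$-restricted strongly convex if there is $\sigma_s>0$ with $f(y)\ge f(x)+\nabla f(x)^T(y-x)+\frac{\sigma_s}{2}\|x-y\|_2^2$ for all $x,y$ with $\|x-y\|_0\le s$. *)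

From HB Require Import structures.
From mathcomp Require Import all_boot all_order all_algebra.
From mathcomp Require Import all_classical all_reals all_analysis.
Set Implicit Arguments. Unset Strict Implicit. Unset Printing Implicit Defensive.
Import Order.TTheory GRing.Theory Num.Theory.
Import numFieldNormedType.Exports.
Local Open Scope ring_scope.

Section Defs.
Context {R : realType} {n : nat}.
Implicit Types (x y z : 'rV[R]_n) (A : 'M[R]_n).

Definition dotv x y : R := \sum_i x 0 i * y 0 i.

(* ||z||_A^2 = z^T A z *)
Definition qnorm A z : R := \sum_i \sum_j z 0 i * A i j * z 0 j.

Definition l0 x : nat := #|[set i | x 0 i != 0]|.

Definition Cs (s : nat) x : Prop := (l0 x <= s)%N.

Definition projCs (s : nat) z y : Prop :=
  Cs s y /\ forall y', Cs s y' -> dotv (y - z) (y - z) <= dotv (y' - z) (y' - z).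

Definition grad (f : 'rV[R]_n -> R) x : 'rV[R]_n :=
  \row_i ('D_(delta_mx 0 i) f x).

Definition C1 (f : 'rV[R]_n -> R) : Prop :=
  (forall x, differentiable f x) /\ continuous (grad f).

Definition convexf (f : 'rV[R]_n -> R) : Prop :=
  forall x y (t : R), 0 <= t <= 1 ->
    f (t *: x + (1 - t) *: y) <= t * f x + (1 - t) * f y.

Definition diagm A : Prop := forall i j, i != j -> A i j = 0.

Definition pd_gt A B : Prop := forall z, z != 0 -> 0 < qnorm (A - B) z.

(* D^{1/2} and D^{-1/2} for a diagonal D ≻ 0 *)
Definition dsqrt A : 'M[R]_n := diag_mx (\row_i Num.sqrt (A i i)).
Definition disqrt A : 'M[R]_n := diag_mx (\row_i (Num.sqrt (A i i))^-1).

Definition IWHT (f : 'rV[R]_n -> R) (s : nat) A (x : nat -> 'rV[R]_n) : Prop :=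
  Cs s (x 0%N) /\
  forall k, exists y, projCs s (x k *m dsqrt A - grad f (x k) *m disqrt A) y /\
                      x k.+1 = y *m disqrt A.

Definition restricted_strongly_convex (f : 'rV[R]_n -> R) (s : nat) : Prop :=
  exists sigma : R, 0 < sigma /\
    forall x y, (l0 (x - y) <= s)%N ->
      f x + dotv (grad f x) (y - x) + sigma / 2 * dotv (x - y) (x - y) <= f y.

End Defs.

(* The previous iterate, rescaled by D^(1/2), competes with the projection, so with
   H-smoothness every step decreases f by (1/2) |x_(k+1) - x_k|^2_(D-H); since (x_k) is
   bounded, convexity bounds f(x_k) from below and f(x_k) decreases to a limit f*.
   On the support of x_(k+1) the step is an exact scaled gradient step,
   D (x_(k+1) - x_k) = - grad f(x_k), so for every u supported there convexity gives
   f(x_(k+1)) - f(u) <= <e_k, x_(k+1) - u> with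
   e_k = grad f(x_(k+1)) - grad f(x_k) - D (x_(k+1) - x_k); smoothness and convexity
   bound |e_k|^2 by a multiple of |x_(k+1) - x_k|^2_(D-H), hence of gap_k - gap_(k+1)
   where gap_k = f(x_k) - f*.  There are finitely many supports, so eventually every
   support recurs infinitely often; taking u = x_m for a late iterate with the same
   support (gap_m -> 0) and balancing with AM-GM gives
   gap_(k+1)^2 <= A (gap_k - gap_(k+1)), which forces gap_k = O(1/k).  Restricted
   strong convexity adds - sigma/2 |x_(k+1) - u|^2 and turns the recursion into
   gap_(k+1) <= b (gap_k - gap_(k+1)), i.e. linear convergence. *)

From HB Require Import structures.
From mathcomp Require Import all_boot all_order all_algebra.
From mathcomp Require Import all_classical all_reals all_analysis.
From mathcomp Require Import ring lra zify.
Set Implicit Arguments. Unset Strict Implicit. Unset Printing Implicit Defensive.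
Import Order.TTheory GRing.Theory Num.Theory.
Import numFieldNormedType.Exports.
Local Open Scope classical_set_scope.
Local Open Scope ring_scope.

Section RowVectors.
Context {R : realType} {n : nat}.
Implicit Types (f : 'rV[R]_n -> R) (x y v : 'rV[R]_n) (A : 'M[R]_n).

Lemma mx_norm_entry_le v i : `|v 0 i| <= `|v|.
Proof.
rewrite [X in _ <= X]/Num.norm /= mx_normrE.
exact: (le_bigmax _ _ (0, i)).
Qed.

Lemma row_subE x y i : (x - y) 0 i = x 0 i - y 0 i.
Proof. by rewrite !mxE. Qed.

Lemma qnorm_diag A v : diagm A -> qnorm A v = \sum_i A i i * v 0 i ^+ 2.
Proof.
move=> dA; apply: eq_bigr => i _.
rewrite (bigD1 i) //= big1 ?addr0; first by rewrite expr2 mulrAC mulrC mulrA.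
by move=> j ji; rewrite dA ?mulr0 ?mul0r // eq_sym.
Qed.

Lemma derive_grad f x v : differentiable f x -> 'D_v f x = dotv (grad f x) v.
Proof.
move=> df; rewrite deriveE // {1}(row_sum_delta v) linear_sum /dotv.
apply: eq_bigr => i _; rewrite linearZ /= mxE -deriveE //.
by rewrite mulrC.
Qed.

Lemma convex_slope_le f x y (h : R) : convexf f -> 0 < h <= 1 ->
  h^-1 * (f (h *: (y - x) + x) - f x) <= f y - f x.
Proof.
move=> cf /andP[h0 h1].
have -> : h *: (y - x) + x = h *: y + (1 - h) *: x.
  by apply/rowP => i; rewrite !mxE; ring.
have := cf y x h; rewrite (ltW h0) h1 ler_pdivrMl // => /(_ isT); lra.
Qed.

Lemma convex_grad_ineq f x y : convexf f -> differentiable f x ->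
  f x + dotv (grad f x) (y - x) <= f y.
Proof.
move=> cf df; rewrite -derive_grad // -lerBrDl.
have right_sub : (0 : R)^'+ `=>` 0^'.
  by apply: within_subset => h /gt_eqF/negbT.
have slope_cvg := cvg_trans (cvg_app _ right_sub) (diff_derivable (v := y - x) df).
apply: (cvgr_to_le slope_cvg); near=> h.
apply: convex_slope_le => //; apply/andP; split; first by near: h; exact: nbhs_right_gt.
by near: h; exact: nbhs_right_le.
Unshelve. all: by end_near. Qed.

End RowVectors.

Section RealInequalities.
Context {R : realType}.

Lemma mul_le_amgm (t a b : R) : 0 < t -> a * b <= t / 2 * a ^+ 2 + (2 * t)^-1 * b ^+ 2.
Proof.
move=> t0; have : 0 <= (2 * t)^-1 * (t * a - b) ^+ 2.
  by rewrite mulr_ge0 ?sqr_ge0 // invr_ge0 mulr_ge0 // ltW.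
have -> : (2 * t)^-1 * (t * a - b) ^+ 2 = t / 2 * a ^+ 2 - a * b + (2 * t)^-1 * b ^+ 2.
  by field; exact: lt0r_neq0.
lra.
Qed.

Lemma sum_mul_le_amgm n (t : R) (a b : 'I_n -> R) : 0 < t ->
  \sum_i a i * b i <= t / 2 * \sum_i a i ^+ 2 + (2 * t)^-1 * \sum_i b i ^+ 2.
Proof.
by move=> t0; rewrite !mulr_sumr -big_split; apply: ler_sum => i _; exact: mul_le_amgm.
Qed.

(* Optimizing the AM-GM parameter [t = B / r]. *)
Lemma sqr_le_of_amgm (r E B : R) : 0 <= r -> 0 < B -> 0 <= E ->
  (forall eps t, 0 < eps -> 0 < t -> r <= eps + t / 2 * E + (2 * t)^-1 * B) ->
  r ^+ 2 <= B * E.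
Proof.
move=> r0 B0 E0 rle.
have [->|rn0] := eqVneq r 0; first by rewrite expr0n /= mulr_ge0 // ltW.
have rpos : 0 < r by rewrite lt0r rn0.
apply/ler_addgt0Pr => eps eps0.
have := rle (eps / (2 * r)) (B / r) (divr_gt0 eps0 (mulr_gt0 (ltr0n _ 2) rpos)) (divr_gt0 B0 rpos).
have -> : (2 * (B / r))^-1 * B = r / 2 by field; rewrite ?gt_eqF.
move=> {}rle; have {}rle : r / 2 <= eps / (2 * r) + B / r / 2 * E by lra.
have := ler_wpM2l (ltW (mulr_gt0 (ltr0n _ 2) rpos)) rle.
have -> : 2 * r * (r / 2) = r ^+ 2 by rewrite expr2; field.
have -> : 2 * r * (eps / (2 * r) + B / r / 2 * E) = eps + B * E by field; rewrite gt_eqF.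
lra.
Qed.

Lemma sublinear_rate_step (A a b c N : R) : 0 < A -> 2 * A <= c -> 0 <= a -> 1 <= N ->
  a ^+ 2 <= A * (b - a) -> b * N <= c -> a * (N + 1) <= c.
Proof.
move=> A0 Ac a0 N1 ab bN; rewrite leNgt; apply/negP => ac.
have h1 : a ^+ 2 * N + A * a * N <= A * c.
  have : (a ^+ 2 + A * a) * N <= A * b * N by apply: ler_wpM2r; lra.
  have : A * (b * N) <= A * c by rewrite ler_pM2l.
  lra.
have h2 : A * c < A * (a * (N + 1)) by rewrite ltr_pM2l.
have h3 : a ^+ 2 * N < A * a by lra.
have apos : 0 < a.
  rewrite lt0r a0 andbT; apply: contraTneq h3 => ->.
  by rewrite expr0n /= !mul0r mulr0 ltxx.
have h4 : a * N < A by rewrite -(ltr_pM2l apos); move: h3; rewrite expr2; lra.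
have : a <= a * N by rewrite ler_peMr.
lra.
Qed.

Lemma sublinear_rate (r : nat -> R) (A : R) K0 : 0 < A -> (forall k, 0 <= r k) ->
  (forall k, (K0 <= k)%N -> r k.+1 ^+ 2 <= A * (r k - r k.+1)) ->
  exists K c, 0 < c /\ forall k, (K <= k)%N -> r k <= c / k%:R.
Proof.
move=> A0 r0 rec; pose c := r K0 + 2 * A.
have Ac : 2 * A <= c by have := r0 K0; rewrite /c; lra.
have rN : forall j, r (K0 + j)%N * j.+1%:R <= c.
  elim=> [|j IHj]; first by rewrite addn0 mulr1 /c; lra.
  rewrite addnS -natr1.
  have := @sublinear_rate_step A (r (K0 + j).+1) (r (K0 + j)%N) c j.+1%:R A0 Ac (r0 _).
  by apply; rewrite ?ler1n //; exact: rec (leq_addr _ _).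
exists (2 * K0).+1%N, (2 * c); split; first lra.
move=> k Kk; have K0k : (K0 <= k)%N by lia.
rewrite ler_pdivlMr ?ltr0n; last by lia.
have := rN (k - K0)%N; rewrite subnKC //.
have : k%:R <= 2 * (k - K0).+1%:R :> R by rewrite -natrM ler_nat; lia.
have := r0 k; nra.
Qed.

Lemma linear_rate (r : nat -> R) (b : R) K0 : 0 < b -> (forall k, 0 <= r k) ->
  (forall k, (K0 <= k)%N -> r k.+1 <= b * (r k - r k.+1)) ->
  exists c rho, 0 < c /\ 0 < rho < 1 /\ forall k, (K0 <= k)%N -> r k <= c * rho ^+ k.
Proof.
move=> b0 r0 rec; pose rho := b / (1 + b).
have rho0 : 0 < rho by rewrite divr_gt0 //; lra.
have rho1 : rho < 1 by rewrite ltr_pdivrMr; lra.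
have contr k : (K0 <= k)%N -> r k.+1 <= rho * r k.
  move=> /rec; rewrite /rho mulrAC ler_pdivlMr; lra.
have rj j : r (K0 + j)%N <= r K0 * rho ^+ j.
  elim: j => [|j IHj]; first by rewrite addn0 expr0 mulr1.
  rewrite addnS exprS mulrCA; apply: le_trans (contr _ (leq_addr _ _)) _.
  by rewrite ler_pM2l.
exists (r K0 / rho ^+ K0 + 1), rho; split; last split.
- by rewrite ltr_wpDl // divr_ge0 // exprn_ge0 // ltW.
- by rewrite rho0 rho1.
move=> k K0k; have := rj (k - K0)%N; rewrite subnKC // => /le_trans; apply.
rewrite -[in leRHS](subnKC K0k) exprD mulrDl mul1r mulrA divfK ?expf_neq0 ?gt_eqF //.
by rewrite lerDl mulr_ge0 // exprn_ge0 // ltW.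
Qed.

Lemma ler_sum_term n (F : 'I_n -> R) j : (forall i, 0 <= F i) -> F j <= \sum_i F i.
Proof. by move=> F0; rewrite (bigD1 j) //= lerDl sumr_ge0. Qed.

Lemma fin_seq_recurrent (T : finType) (a : nat -> T) :
  exists K, forall k, (K <= k)%N -> forall N, exists2 m, (N <= m)%N & a m = a k.
Proof.
have fin_or_inf t : exists N, (forall N', exists2 m, (N' <= m)%N & a m = t) \/
    (forall m, (N <= m)%N -> a m != t).
  have [inf|/existsNP[N' fin]] := pselect (forall N', exists2 m, (N' <= m)%N & a m = t).
    by exists 0%N; left.
  by exists N'; right => m N'm; apply/eqP => amt; apply: fin; exists m.
have [last_visit visitP] := choice fin_or_inf.
exists (\max_t last_visit t)%N => k Kk.
have [//|fin] := visitP (a k).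
by have := fin k (leq_trans (leq_bigmax_cond _ isT) Kk); rewrite eqxx.
Qed.

Lemma cvg_recurrent_label (T : finType) (a : nat -> T) (u : R^nat) (l : R) :
  u @ \oo --> l -> exists K, forall k, (K <= k)%N -> forall eps, 0 < eps ->
    exists2 m, a m = a k & u m - l <= eps.
Proof.
move=> ul; have [K recur] := fin_seq_recurrent a.
exists K => k Kk eps eps0.
have [N _ near_l] := (cvgrPdist_le _ _).1 ul eps eps0.
have [m Nm amk] := recur k Kk N.
exists m => //; have := near_l m Nm; rewrite /= distrC.
exact/le_trans/ler_norm.
Qed.

End RealInequalities.

Section Sparsity.
Context {R : realType} {n : nat}.
Implicit Types (v y z : 'rV[R]_n).

Definition supp v : {set 'I_n} := [set i | v 0 i != 0].

Lemma supp_mul_diag v (c : 'rV[R]_n) : (forall i, c 0 i != 0) ->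
  supp (v *m diag_mx c) = supp v.
Proof.
by move=> c0; apply/setP => i; rewrite !inE mul_mx_diag mxE mulf_eq0 negb_or c0 andbT.
Qed.

Lemma Cs_mul_diag s v (c : 'rV[R]_n) : (forall i, c 0 i != 0) -> Cs s (v *m diag_mx c) = Cs s v.
Proof. by move=> c0; rewrite /Cs /l0 -/(supp _) supp_mul_diag. Qed.

Lemma projCs_eq_on_supp s z y i : projCs s z y -> y 0 i != 0 -> y 0 i = z 0 i.
Proof.
move=> [ys ymin] yi0.
pose y' := \row_j (if j == i then z 0 j else y 0 j).
have y's : Cs s y'.
  apply: leq_trans ys; apply: subset_leq_card; apply/fintype.subsetP => j.
  by rewrite !inE /y' mxE; case: (j =P i) => [-> _|].
have := ymin _ y's; rewrite /dotv (bigD1 i) //= [leRHS](bigD1 i) //=.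
have -> : \sum_(j < n | j != i) (y' - z) 0 j * (y' - z) 0 j =
          \sum_(j < n | j != i) (y - z) 0 j * (y - z) 0 j.
  by apply: eq_bigr => j ji; rewrite !mxE (negbTE ji).
rewrite !mxE eqxx subrr mul0r add0r gerDr => yz_le0.
by apply/eqP; rewrite -subr_eq0 -sqrf_eq0 eq_le sqr_ge0 andbT expr2.
Qed.

End Sparsity.

Section SmoothConvex.
Context {R : realType} {n : nat} (f : 'rV[R]_n -> R) (d : 'I_n -> R).
Hypotheses (f_convex : convexf f) (d_gt0 : forall i, 0 < d i)
  (f_smooth : forall u v, f v <= f u + dotv (grad f u) (v - u) +
                                 2^-1 * \sum_i d i * (v 0 i - u 0 i) ^+ 2).

(* Compare the smoothness upper bound at [v + w] with the convexity lower bound,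
   for the step [w = d^-1 (grad f u - grad f v)]. *)
Lemma smooth_convex_grad_lipschitz u v : differentiable f u ->
  \sum_i (grad f v 0 i - grad f u 0 i) ^+ 2 / d i <= \sum_i d i * (v 0 i - u 0 i) ^+ 2.
Proof.
move=> df; pose w := \row_i ((grad f u 0 i - grad f v 0 i) / d i).
set T := \sum_i _ / d i.
have up_vw := f_smooth v (v + w).
have low_vw := convex_grad_ineq (v + w) f_convex df.
have up_v := f_smooth u v.
have E1 : dotv (grad f u) (v + w - u) = dotv (grad f u) (v - u) + dotv (grad f u) w.
  by rewrite /dotv -big_split; apply: eq_bigr => i _ /=; rewrite !mxE; ring.
have E2 : dotv (grad f u) w - dotv (grad f v) (v + w - v) = T.
  rewrite /dotv /T -sumrB; apply: eq_bigr => i _ /=; rewrite !mxE.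
  by field; rewrite gt_eqF.
have E3 : \sum_i d i * ((v + w) 0 i - v 0 i) ^+ 2 = T.
  by apply: eq_bigr => i _ /=; rewrite !mxE; field; rewrite gt_eqF.
rewrite E3 in up_vw; rewrite E1 in low_vw; lra.
Qed.

End SmoothConvex.

Section IWHT.
Context {R : realType} {n s : nat} (f : 'rV[R]_n -> R) (H D : 'M[R]_n)
  (x : nat -> 'rV[R]_n).
Hypotheses (f_diff : forall u, differentiable f u) (f_convex : convexf f)
  (H_diag : diagm H) (H_ge0 : forall i, 0 <= H i i)
  (f_smooth : forall u v, f v <= f u + dotv (grad f u) (v - u) + 2^-1 * qnorm H (v - u))
  (D_diag : diagm D) (D_gt_H : pd_gt D H) (x_iwht : IWHT f s D x).
Implicit Types (u v : 'rV[R]_n).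

Local Notation g k i := (grad f (x k) 0 i).
Local Notation dx k i := (x k.+1 0 i - x k 0 i).

Lemma diag_gap_gt0 i : 0 < D i i - H i i.
Proof.
have DH_diag : diagm (D - H) by move=> a b ab; rewrite !mxE D_diag ?H_diag // subr0.
have := @D_gt_H 'e_i; rewrite qnorm_diag // (bigD1 i) //= big1 ?addr0.
- rewrite !mxE !eqxx /= expr1n mulr1; apply; apply/negP => /eqP/rowP/(_ i).
  by rewrite !mxE !eqxx /= => /eqP; rewrite oner_eq0.
- by move=> j ji; rewrite !mxE (negbTE ji) expr0n mulr0.
Qed.

Lemma diagD_gt0 i : 0 < D i i.
Proof. by have := diag_gap_gt0 i; have := H_ge0 i; lra. Qed.

Definition sqrtD i := Num.sqrt (D i i).

Lemma sqrtD_neq0 i : sqrtD i != 0.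
Proof. by rewrite gt_eqF // sqrtr_gt0 diagD_gt0. Qed.

Lemma sqr_sqrtD i : sqrtD i ^+ 2 = D i i.
Proof. by rewrite sqr_sqrtr // ltW // diagD_gt0. Qed.

Lemma dsqrt_entry v i : (v *m dsqrt D) 0 i = v 0 i * sqrtD i.
Proof. by rewrite mul_mx_diag !mxE. Qed.

Lemma disqrt_entry v i : (v *m disqrt D) 0 i = v 0 i / sqrtD i.
Proof. by rewrite mul_mx_diag !mxE. Qed.

Definition iwht_target k := x k *m dsqrt D - grad f (x k) *m disqrt D.

Lemma iwht_target_entry k i : iwht_target k 0 i = x k 0 i * sqrtD i - g k i / sqrtD i.
Proof. by rewrite mxE [in X in _ + X]mxE dsqrt_entry disqrt_entry. Qed.

Lemma iwht_stepP k :
  exists2 y, projCs s (iwht_target k) y & forall i, x k.+1 0 i = y 0 i / sqrtD i.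
Proof.
have [y [py ->]] := x_iwht.2 k.
by exists y => // i; rewrite disqrt_entry.
Qed.

Lemma iwht_sparse k : Cs s (x k).
Proof.
case: k => [|k]; first exact: x_iwht.1.
have [y [[ys _] ->]] := x_iwht.2 k.
by rewrite Cs_mul_diag // => i; rewrite mxE invr_eq0 sqrtD_neq0.
Qed.

Lemma iwht_step_on_supp k i : x k.+1 0 i != 0 -> D i i * dx k i = - g k i.
Proof.
have [y py ->] := iwht_stepP k; rewrite mulf_eq0 negb_or => /andP[yi0 _].
rewrite (projCs_eq_on_supp py yi0) iwht_target_entry -sqr_sqrtD.
by field; exact: sqrtD_neq0.
Qed.

(* [x k *m dsqrt D] competes with the projection; in the D-scaled coordinates the
   squared distance to the target is the separable quadratic model plus a constant. *)
Lemma iwht_model_nonpos k :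
  \sum_i (D i i * dx k i ^+ 2 + 2 * g k i * dx k i) <= 0.
Proof.
have [y [ys ymin] yE] := iwht_stepP k.
have x_sparse : Cs s (x k *m dsqrt D).
  by rewrite Cs_mul_diag; [exact: iwht_sparse | move=> i; rewrite mxE sqrtD_neq0].
pose c := \sum_i g k i ^+ 2 / D i i.
have dist_y : dotv (y - iwht_target k) (y - iwht_target k) =
    \sum_i (D i i * dx k i ^+ 2 + 2 * g k i * dx k i) + c.
  rewrite -big_split; apply: eq_bigr => i _ /=.
  rewrite yE mxE [in X in _ + X]mxE iwht_target_entry -!sqr_sqrtD.
  by field; exact: sqrtD_neq0.
have dist_x : dotv (x k *m dsqrt D - iwht_target k) (x k *m dsqrt D - iwht_target k) = c.
  apply: eq_bigr => i _ /=.
  rewrite mxE [in X in _ + X]mxE iwht_target_entry dsqrt_entry -!sqr_sqrtD.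
  by field; exact: sqrtD_neq0.
by have := ymin _ x_sparse; rewrite dist_y dist_x; lra.
Qed.

Definition decrease k := \sum_i (D i i - H i i) * dx k i ^+ 2.

Lemma decrease_ge0 k : 0 <= decrease k.
Proof. by apply: sumr_ge0 => i _; rewrite mulr_ge0 ?sqr_ge0 // ltW // diag_gap_gt0. Qed.

Lemma iwht_sufficient_decrease k : f (x k.+1) <= f (x k) - 2^-1 * decrease k.
Proof.
have := f_smooth (x k) (x k.+1); rewrite qnorm_diag // -addrA.
have model := iwht_model_nonpos k.
have -> : dotv (grad f (x k)) (x k.+1 - x k) +
    2^-1 * \sum_i H i i * (x k.+1 - x k) 0 i ^+ 2 =
  2^-1 * \sum_i (D i i * dx k i ^+ 2 + 2 * g k i * dx k i) - 2^-1 * decrease k.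
  rewrite /dotv !mulr_sumr -sumrB -big_split; apply: eq_bigr => i _ /=.
  by rewrite !mxE; field.
lra.
Qed.

Lemma f_smooth_diagD u v : f v <= f u + dotv (grad f u) (v - u) +
  2^-1 * \sum_i D i i * (v 0 i - u 0 i) ^+ 2.
Proof.
apply: (le_trans (f_smooth u v)); rewrite lerD2l qnorm_diag // ler_pM2l ?invr_gt0 //.
apply: ler_sum => i _; rewrite !mxE ler_wpM2r ?sqr_ge0 //.
by have := diag_gap_gt0 i; lra.
Qed.

Definition residual k i := g k.+1 i - g k i - D i i * dx k i.

Lemma iwht_grad_inner k u : supp u \subset supp (x k.+1) ->
  dotv (grad f (x k.+1)) (u - x k.+1) = - \sum_i residual k i * (x k.+1 0 i - u 0 i).
Proof.
move=> /fintype.subsetP uxk; rewrite /dotv -sumrN; apply: eq_bigr => i _.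
rewrite /residual row_subE.
have [xi0|xi_neq0] := eqVneq (x k.+1 0 i) 0.
  have : i \notin supp u by apply/negP => /uxk; rewrite inE xi0 eqxx.
  by rewrite inE negbK xi0 => /eqP ->; ring.
by rewrite -(opprK (g k i)) -(iwht_step_on_supp xi_neq0); ring.
Qed.

Lemma iwht_gap_le k u : supp u \subset supp (x k.+1) ->
  f (x k.+1) - f u <= \sum_i residual k i * (x k.+1 0 i - u 0 i).
Proof.
move=> uxk; have := convex_grad_ineq u f_convex (f_diff (x k.+1)).
by rewrite iwht_grad_inner //; lra.
Qed.

Lemma iwht_gap_le_rsc k u (sigma : R) :
  (forall y z, (l0 (y - z) <= s)%N ->
     f y + dotv (grad f y) (z - y) + sigma / 2 * dotv (y - z) (y - z) <= f z) ->
  supp u \subset supp (x k.+1) ->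
  f (x k.+1) - f u <= \sum_i residual k i * (x k.+1 0 i - u 0 i)
                      - sigma / 2 * \sum_i (x k.+1 0 i - u 0 i) ^+ 2.
Proof.
move=> f_rsc uxk.
have diff_sparse : (l0 (x k.+1 - u) <= s)%N.
  apply: leq_trans (iwht_sparse k.+1); apply: subset_leq_card.
  apply/fintype.subsetP => j; rewrite !inE !mxE; apply: contraNneq => xj0.
  have : j \notin supp u by apply/negP => /(fintype.subsetP uxk); rewrite inE xj0 eqxx.
  by rewrite inE negbK xj0 => /eqP ->; rewrite subrr.
have := f_rsc _ _ diff_sparse; rewrite iwht_grad_inner //.
have -> : dotv (x k.+1 - u) (x k.+1 - u) = \sum_i (x k.+1 0 i - u 0 i) ^+ 2.
  by apply: eq_bigr => i _; rewrite !mxE expr2.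
lra.
Qed.

Definition residual_const :=
  4 * (\sum_i D i i) * \sum_i D i i / (D i i - H i i).

Lemma residual_const_ge0 : 0 <= residual_const.
Proof.
rewrite /residual_const !mulr_ge0 // sumr_ge0 // => i _.
  exact/ltW/diagD_gt0.
by rewrite divr_ge0 // ltW ?diagD_gt0 ?diag_gap_gt0.
Qed.

Lemma iwht_residual_le k : \sum_i residual k i ^+ 2 <= residual_const * decrease k.
Proof.
set dsum := \sum_i D i i; set lam := \sum_i D i i / (D i i - H i i).
have dsum_ge i : D i i <= dsum.
  by apply: (ler_sum_term (F := fun j => D j j)) => j; exact/ltW/diagD_gt0.
have lam_ge i : D i i / (D i i - H i i) <= lam.
  apply: (ler_sum_term (F := fun j => D j j / (D j j - H j j))) => j.
  by rewrite divr_ge0 // ltW ?diagD_gt0 ?diag_gap_gt0.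
have dsum0 : 0 <= dsum by apply: sumr_ge0 => i _; exact/ltW/diagD_gt0.
pose dg i := g k.+1 i - g k i.
have res_le i : residual k i ^+ 2 <=
    2 * dsum * (dg i ^+ 2 / D i i) + 2 * dsum * (D i i * dx k i ^+ 2).
  have D0 := diagD_gt0 i.
  have h1 : dg i ^+ 2 <= dsum * (dg i ^+ 2 / D i i).
    rewrite -[leLHS](divfK (lt0r_neq0 D0)) mulrC ler_wpM2r //.
    by rewrite divr_ge0 ?sqr_ge0 // ltW.
  have h2 : (D i i * dx k i) ^+ 2 <= dsum * (D i i * dx k i ^+ 2).
    by rewrite exprMn expr2 -mulrA ler_wpM2r // mulr_ge0 ?sqr_ge0 // ltW.
  have := sqr_ge0 (dg i + D i i * dx k i); rewrite /residual -/(dg i); nra.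
have lip := smooth_convex_grad_lipschitz f_convex diagD_gt0 f_smooth_diagD (x k.+1) (f_diff (x k)).
have D_le_decrease : \sum_i D i i * dx k i ^+ 2 <= lam * decrease k.
  rewrite /decrease mulr_sumr; apply: ler_sum => i _.
  have gap0 := diag_gap_gt0 i.
  have -> : D i i * dx k i ^+ 2 = D i i / (D i i - H i i) * ((D i i - H i i) * dx k i ^+ 2).
    by field; exact: lt0r_neq0.
  by rewrite ler_wpM2r ?lam_ge // mulr_ge0 ?sqr_ge0 // ltW.
apply: le_trans (ler_sum _ (fun i _ => res_le i)) _.
rewrite big_split /= -!mulr_sumr /residual_const -/dsum -/lam.
have := ler_wpM2l dsum0 lip; have := ler_wpM2l dsum0 D_le_decrease; nra.
Qed.

Lemma iwht_value_nonincreasing : nonincreasing_seq (fun k => f (x k)).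
Proof.
apply: (nonincreasing_seqP _).1 => k /=.
by have := iwht_sufficient_decrease k; have := decrease_ge0 k; lra.
Qed.

Variable M : R.
Hypothesis x_bounded : forall k, `|x k| <= M.

Lemma iwht_entry_bounded k i : `|x k 0 i| <= M.
Proof. exact: le_trans (mx_norm_entry_le _ i) (x_bounded k). Qed.

Lemma iwht_value_lbound : has_lbound (range (fun k => f (x k))).
Proof.
exists (f (x 0) - \sum_i `|g 0 i| * (2 * M)) => _ [k _ <-].
have := convex_grad_ineq (x k) f_convex (f_diff (x 0)).
suff : - \sum_i `|g 0 i| * (2 * M) <= dotv (grad f (x 0)) (x k - x 0) by lra.
rewrite -sumrN; apply: ler_sum => i _; rewrite row_subE.
have : `|g 0 i * (x k 0 i - x 0 0 i)| <= `|g 0 i| * (2 * M).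
  rewrite normrM ler_wpM2l //; apply: le_trans (ler_normB _ _) _.
  by have := iwht_entry_bounded k i; have := iwht_entry_bounded 0 i; lra.
by rewrite ler_norml => /andP[].
Qed.

Definition fstar := inf (range (fun k => f (x k))).

Lemma iwht_value_cvg : (fun k => f (x k)) @ \oo --> fstar.
Proof. exact: nonincreasing_cvgn iwht_value_nonincreasing iwht_value_lbound. Qed.

Definition gap k := f (x k) - fstar.

Lemma gap_ge0 k : 0 <= gap k.
Proof.
rewrite subr_ge0 -(cvg_lim _ iwht_value_cvg) //.
exact: nonincreasing_cvgn_ge iwht_value_nonincreasing (cvgP _ iwht_value_cvg) k.
Qed.

Lemma decrease_le_gap k : decrease k <= 2 * (gap k - gap k.+1).
Proof. by have := iwht_sufficient_decrease k; rewrite /gap; lra. Qed.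

Lemma iwht_gap_approx : exists K, forall k, (K <= k)%N -> forall eps, 0 < eps ->
  exists2 m, supp (x m) = supp (x k) & gap m <= eps.
Proof. exact: (cvg_recurrent_label (fun k => supp (x k)) iwht_value_cvg). Qed.

Definition dist_bound := \sum_(i < n) 4 * M ^+ 2 + 1.

Lemma dist_bound_gt0 : 0 < dist_bound.
Proof. by rewrite ltr_wpDl // sumr_ge0 // => i _; rewrite mulr_ge0 // sqr_ge0. Qed.

Lemma iwht_dist_le k m : \sum_i (x k 0 i - x m 0 i) ^+ 2 <= dist_bound.
Proof.
apply: le_trans (_ : _ <= \sum_(i < n) 4 * M ^+ 2) _; last by rewrite lerDl.
apply: ler_sum => i _.
have := iwht_entry_bounded k i; have := iwht_entry_bounded m i.
rewrite !ler_norml => /andP[? ?] /andP[? ?]; nra.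
Qed.

Lemma iwht_gap_sqr_recursion : exists K A, 0 < A /\
  forall k, (K <= k)%N -> gap k.+1 ^+ 2 <= A * (gap k - gap k.+1).
Proof.
have [K approx] := iwht_gap_approx.
have C0 := residual_const_ge0.
exists K, (2 * dist_bound * residual_const + 1); split.
  by rewrite ltr_wpDl // mulr_ge0 // mulr_ge0 // ltW // dist_bound_gt0.
move=> k Kk; set E := \sum_i residual k i ^+ 2.
have gap_sqr : gap k.+1 ^+ 2 <= dist_bound * E.
  apply: sqr_le_of_amgm; rewrite ?gap_ge0 ?dist_bound_gt0 //.
    by apply: sumr_ge0 => i _; exact: sqr_ge0.
  move=> eps t eps0 t0.
  have [m sm gap_m] := approx k.+1 (leqW Kk) eps eps0.
  have := iwht_gap_le (u := x m) (k := k); rewrite sm subxx => /(_ isT).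
  have := sum_mul_le_amgm (residual k) (fun i => x k.+1 0 i - x m 0 i) t0.
  have t2_ge0 : 0 <= (2 * t)^-1 by rewrite invr_ge0 mulr_ge0 // ltW.
  have := ler_wpM2l t2_ge0 (iwht_dist_le k.+1 m).
  by move: gap_m; rewrite /gap -/E; lra.
have B0 := ltW dist_bound_gt0.
have := ler_wpM2l B0 (iwht_residual_le k).
have := ler_wpM2l (mulr_ge0 B0 C0) (decrease_le_gap k).
have := decrease_ge0 k; have := decrease_le_gap k; rewrite -/E; nra.
Qed.

Lemma iwht_gap_linear_recursion : restricted_strongly_convex f s ->
  exists K b, 0 < b /\ forall k, (K <= k)%N -> gap k.+1 <= b * (gap k - gap k.+1).
Proof.
move=> [sigma [sigma0 f_rsc]].
have [K approx] := iwht_gap_approx.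
have C0 := residual_const_ge0.
have isigma0 : 0 < sigma^-1 by rewrite invr_gt0.
exists K, (sigma^-1 * residual_const + 1); split.
  by rewrite ltr_wpDl // mulr_ge0 // ltW.
move=> k Kk; set E := \sum_i residual k i ^+ 2.
have gap_le : gap k.+1 <= sigma^-1 / 2 * E.
  apply/ler_addgt0Pr => eps eps0.
  have [m sm gap_m] := approx k.+1 (leqW Kk) eps eps0.
  have := iwht_gap_le_rsc (u := x m) (k := k) f_rsc; rewrite sm subxx => /(_ isT).
  have := sum_mul_le_amgm (residual k) (fun i => x k.+1 0 i - x m 0 i) isigma0.
  have -> : (2 * sigma^-1)^-1 = sigma / 2 by field; exact: lt0r_neq0.
  by move: gap_m; rewrite /gap -/E; lra.
have a0 : 0 <= sigma^-1 / 2 by rewrite divr_ge0 // ltW.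
have := ler_wpM2l a0 (iwht_residual_le k).
have := ler_wpM2l (mulr_ge0 a0 C0) (decrease_le_gap k).
have := decrease_ge0 k; have := decrease_le_gap k; rewrite -/E; nra.
Qed.

End IWHT.

Theorem corollary4p10 (R : realType) (n s : nat) (f : 'rV[R]_n -> R)
    (H D : 'M[R]_n) (x : nat -> 'rV[R]_n) :
  (0 < s)%N ->
  C1 f -> convexf f ->
  diagm H -> (forall i, 0 <= H i i) ->
  (forall u v, f v <= f u + dotv (grad f u) (v - u) + 2^-1 * qnorm H (v - u)) ->
  diagm D -> pd_gt D H ->
  IWHT f s D x ->
  (exists M : R, forall k, `|x k| <= M) ->
  exists fstar : R,
    (fun k => f (x k)) @ \oo --> fstar /\
    (exists (K : nat) (c : R), 0 < c /\
        forall k, (K <= k)%N -> f (x k) - fstar <= c / k%:R) /\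
    (restricted_strongly_convex f s ->
      exists (c rho : R), 0 < c /\ 0 < rho < 1 /\
        \forall k \near \oo, f (x k) - fstar <= c * rho ^+ k).
Proof.
move=> _ [f_diff _] f_convex H_diag H_ge0 f_smooth D_diag D_gt_H x_iwht [M x_bounded].
have gap0 := gap_ge0 f_diff f_convex H_diag H_ge0 f_smooth D_diag D_gt_H x_iwht x_bounded.
exists (fstar f x); split.
  exact: (iwht_value_cvg f_diff f_convex H_diag H_ge0 f_smooth D_diag D_gt_H x_iwht x_bounded).
split.
  have [K [A [A0 rec]]] := iwht_gap_sqr_recursion f_diff f_convex H_diag H_ge0 f_smooth
    D_diag D_gt_H x_iwht x_bounded.
  exact: sublinear_rate A0 gap0 rec.
move=> f_rsc.
have [K [b [b0 rec]]] := iwht_gap_linear_recursion f_diff f_convex H_diag H_ge0 f_smooth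
  D_diag D_gt_H x_iwht x_bounded f_rsc.
have [c [rho [c0 [rho01 rate]]]] := linear_rate b0 gap0 rec.
by exists c, rho; do 2 split => //; exists K.
Qed.
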